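(* For all integers $n,i,k\ge0$, as an identity of polynomials in $q$, \[ {n+i\brack i}{n+k\brack k}=\sum_{j\ge0}(-1)^{i+j+k}\,q^{\frac{(k+i-j)(2n+k+i-j+1)}{2}}{j\brack j-i,\,j-k,\,i+k-j}{n+j\brack j}. \] Consequently, defining $P^{(1)}_{k,k}=1$, $P^{(1)}_{k,j}=0$ for $j\neq k$ and $P^{(r+1)}_{k,j}=\sum_i (-1)^{i+j+k}q^{\frac{(k+i-j)(k+i-j+1)}{2}}{j\brack j-i,\,j-k,\,i+k-j}P^{(r)}_{k,i}$, the $P^{(r)}_{k,j}$ are polynomials in $q$ with integer coefficients and ${n+k\brack k}^r=\sum_j q^{(rk-j)n}{n+j\brack j}P^{(r)}_{k,j}$ for all $n,k\ge0$, $r\ge1$.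
   Context: $q$ is an indeterminate; $(q)_0=1$, $(q)_m=(1-q)(1-q^2)\cdots(1-q^m)$. The $q$-binomial ${n\brack k}=\frac{(q)_n}{(q)_k(q)_{n-k}}$ if $0\le k\le n$ and $0$ otherwise. The $q$-multinomial ${m\brack a,b,c}=\frac{(q)_m}{(q)_a(q)_b(q)_c}$ if $a,b,c\ge0$ and $a+b+c=m$, and $0$ otherwise. *)

From HB Require Import structures.
From mathcomp Require Import all_boot all_order all_algebra fraction.
Set Implicit Arguments. Unset Strict Implicit. Unset Printing Implicit Defensive.
Import Order.TTheory GRing.Theory Num.Theory.
Local Open Scope ring_scope.

Notation "x %:F" := (@FracField.tofrac _ x).
Notation F := {fraction {poly int}}.

Definition q : F := ('X : {poly int})%:F.

Definition qpoch (m : nat) : F := \prod_(i < m) (1 - q ^+ i.+1).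

Definition qbin (n k : nat) : F :=
  if (k <= n)%N then qpoch n / (qpoch k * qpoch (n - k)) else 0.

Definition qmulti (m : nat) (a b c : int) : F :=
  if [&& 0 <= a, 0 <= b, 0 <= c & a + b + c == m%:Z]
  then qpoch m / (qpoch `|a|%N * qpoch `|b|%N * qpoch `|c|%N) else 0.

(* Paux s k j = P^{(s+1)}_{k,j}.  The sum over i is over i <= j, since the
   multinomial vanishes when j - i < 0. *)
Fixpoint Paux (s k j : nat) : F :=
  match s with
  | 0 => (j == k)%:R
  | s'.+1 =>
      \sum_(i < j.+1)
        (-1) ^+ (i + j + k) *
        q ^ (((k%:Z + i%:Z - j%:Z) * (k%:Z + i%:Z - j%:Z + 1)) %/ 2)%Z *
        qmulti j (j%:Z - i%:Z) (j%:Z - k%:Z) (i%:Z + k%:Z - j%:Z) *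
        Paux s' k i
  end.

(* P r k j = P^{(r)}_{k,j}, meaningful for r >= 1 *)
Definition P (r k j : nat) : F := Paux r.-1 k j.

From mathcomp Require Import all_boot all_order all_algebra fraction.
From mathcomp Require Import ring zify.
Set Implicit Arguments. Unset Strict Implicit. Unset Printing Implicit Defensive.
Import GRing.Theory Num.Theory.
Local Open Scope ring_scope.

(* With x = q^n one has [n+j brack j] = (xq;q)_j / (q;q)_j.  The product formula
   rests on the q-Chu-Vandermonde expansion
     (xq;q)_k = sum_m (-x)^m q^(m(m+1)/2) (q;q)_m [i brack m] [k brack m] (xq^(i+1);q)_(k-m),
   proved by induction on k with q-Pascal's rule.  Multiplied by (xq;q)_i, its last
   factor becomes (xq;q)_(i+k-m), and with j = i+k-m the q-factorials recombine into
   the q-multinomial.  As m(2n+m+1)/2 = mn + m(m+1)/2, the product formula says that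
   multiplication by [n+k brack k] acts on the family q^(-jn) [n+j brack j] through
   the weights of the recursion defining P, which gives the power formula by
   induction on r.  Integrality holds because q-Pascal's rule makes q-binomials,
   hence q-multinomials, polynomials. *)

Lemma sum_ord_narrow (V : nmodType) (f : nat -> V) n N : (n <= N)%N ->
  (forall j, (n <= j < N)%N -> f j = 0) -> \sum_(j < N) f j = \sum_(j < n) f j.
Proof.
move=> le_nN f0; rewrite -!(big_mkord xpredT) (big_cat_nat (leq0n n) le_nN) /=.
by rewrite [X in _ + X]big_nat_cond [X in _ + X]big1 ?addr0 // => j /andP [/f0].
Qed.

(* [field] is impractically slow on the concrete fraction field [F], so below the
   cancelling factors [a / a] are inserted by hand and [ring] finishes. *)
Lemma eq_divff_mul (K : fieldType) (b a : K) : a != 0 -> b = a / a * b.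
Proof. by move=> a_neq0; rewrite divff // mul1r. Qed.

Lemma q_neq0 : q != 0.
Proof. by rewrite /q tofrac_eq0 polyX_eq0. Qed.

Lemma onem_qX_neq0 m : 1 - q ^+ m.+1 != 0.
Proof.
rewrite /q -tofracXn -tofrac1 -tofracB tofrac_eq0.
apply/eqP => /(congr1 (fun p : {poly int} => p`_0)).
by rewrite coefB coef1 coefXn coef0 subr0 => /eqP; rewrite oner_eq0.
Qed.

Lemma qpochS m : qpoch m.+1 = qpoch m * (1 - q ^+ m.+1).
Proof. by rewrite /qpoch big_ord_recr. Qed.

Lemma qpoch0 : qpoch 0 = 1.
Proof. by rewrite /qpoch big_ord0. Qed.

Lemma qpoch_neq0 m : qpoch m != 0.
Proof.
elim: m => [|m IHm]; first by rewrite qpoch0 oner_neq0.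
by rewrite qpochS; apply: mulf_neq0; [exact: IHm | exact: onem_qX_neq0].
Qed.

Definition qpochx (x : F) (m : nat) : F := \prod_(t < m) (1 - x * q ^+ t.+1).

Lemma qpochxS x m : qpochx x m.+1 = qpochx x m * (1 - x * q ^+ m.+1).
Proof. by rewrite /qpochx big_ord_recr. Qed.

Lemma qpochxD x a b : qpochx x (a + b) = qpochx x a * qpochx (x * q ^+ a) b.
Proof.
rewrite /qpochx big_split_ord; congr (_ * _); apply: eq_bigr => t _.
by rewrite /= -addnS exprD mulrA.
Qed.

Lemma qbin_qpochx n j : qbin (n + j) j = qpochx (q ^+ n) j / qpoch j.
Proof.
have qpochE m : qpoch m = qpochx 1 m by apply: eq_bigr => t _; rewrite mul1r.
rewrite /qbin leq_addl addnK mulrC !qpochE qpochxD mul1r -!qpochE.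
by rewrite invfM -mulrA (mulKf (qpoch_neq0 n)) mulrC.
Qed.

Lemma qbinE n k : (k <= n)%N -> qbin n k = qpoch n / (qpoch k * qpoch (n - k)).
Proof. by rewrite /qbin => ->. Qed.

Lemma qbin_small n k : (n < k)%N -> qbin n k = 0.
Proof. by move=> lt_nk; rewrite /qbin leqNgt lt_nk. Qed.

Lemma qbin0 n : qbin n 0 = 1.
Proof. by rewrite (qbinE (leq0n n)) qpoch0 mul1r subn0 divff ?qpoch_neq0. Qed.

Lemma qbinn n : qbin n n = 1.
Proof. by rewrite (qbinE (leqnn n)) subnn qpoch0 mulr1 divff ?qpoch_neq0. Qed.

Lemma qpochVS k : (qpoch k)^-1 = (qpoch k.+1)^-1 * (1 - q ^+ k.+1).
Proof. by rewrite qpochS invfM (mulfVK (onem_qX_neq0 k)). Qed.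

Lemma qbinEV n k : (k <= n)%N ->
  qbin n k = qpoch n * (qpoch k)^-1 * (qpoch (n - k))^-1.
Proof. by move=> le_kn; rewrite qbinE // invfM mulrA. Qed.

Lemma qbinS n m : qbin n.+1 m.+1 = qbin n m.+1 + q ^+ (n - m) * qbin n m.
Proof.
case: (ltngtP m n) => [lt_mn|lt_nm|->].
- have [d ->] : exists d, n = (m + d).+1 by exists (n - m.+1)%N; lia.
  rewrite !qbinEV; [|lia..].
  rewrite subSS.
  have -> : ((m + d).+1 - m = d.+1)%N by lia.
  have -> : ((m + d).+1 - m.+1 = d)%N by lia.
  rewrite (qpochS (m + d).+1) (qpochVS m) (qpochVS d).
  have -> : q ^+ (m + d).+2 = q ^+ m.+1 * q ^+ d.+1.
    by rewrite -exprD; congr (_ ^+ _); lia.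
  ring.
- by rewrite !qbin_small ?mulr0 ?addr0 // ltnW.
- by rewrite (qbin_small (ltnSn n)) subnn expr0 add0r mul1r !qbinn.
Qed.

Lemma mul_qbin_left n m : qbin n m.+1 * (1 - q ^+ m.+1) = qbin n m * (1 - q ^+ (n - m)).
Proof.
case: (ltngtP m n) => [lt_mn|lt_nm|->].
- have [d ->] : exists d, n = (m + d).+1 by exists (n - m.+1)%N; lia.
  rewrite !qbinEV; [|lia..].
  have -> : ((m + d).+1 - m = d.+1)%N by lia.
  have -> : ((m + d).+1 - m.+1 = d)%N by lia.
  rewrite (qpochVS m) (qpochVS d); ring.
- by rewrite !qbin_small ?mul0r // ltnW.
- by rewrite (qbin_small (ltnSn n)) subnn subrr !mulr0 mul0r.
Qed.

Lemma qpochx_expand x i k :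
  qpochx x k = \sum_(m < k.+1) (- x) ^+ m * q ^+ 'C(m.+1, 2) * (qpoch m * qbin i m) *
                              qbin k m * qpochx (x * q ^+ i) (k - m).
Proof.
pose c m := (- x) ^+ m * q ^+ 'C(m.+1, 2) * (qpoch m * qbin i m).
pose Q := qpochx (x * q ^+ i).
have cS m : c m.+1 = c m * (- x * q ^+ m.+1) * (1 - q ^+ (i - m)).
  rewrite /c; have -> : qpoch m.+1 * qbin i m.+1 = qpoch m * (qbin i m.+1 * (1 - q ^+ m.+1)).
    by rewrite qpochS; ring.
  by rewrite mul_qbin_left exprSr binS bin1 exprD; ring.
suff expand : qpochx x k = \sum_(m < k.+1) c m * qbin k m * Q (k - m)%N by exact expand.
elim: k => [|k IHk].
  by rewrite big_ord1 /c /Q /qpochx !big_ord0 qpoch0 !qbin0 /= expr0 !mul1r.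
pose A m := c m * qbin k m * Q (k.+1 - m)%N.
pose B m := c m.+1 * (q ^+ (k - m) * qbin k m) * Q (k - m)%N.
have AB_step m : (m <= k)%N -> A m + B m = c m * qbin k m * Q (k - m)%N * (1 - x * q ^+ k.+1).
  move=> le_mk; rewrite /A /B cS subSn // /Q qpochxS.
  case: (leqP m i) => [le_mi|lt_im]; last first.
    by rewrite /c (qbin_small lt_im) mulr0; ring.
  have -> : q ^+ k.+1 = q ^+ m.+1 * q ^+ (k - m) by rewrite -exprD; congr (_ ^+ _); lia.
  have -> : x * q ^+ i * q ^+ (k - m).+1 = x * (q ^+ m.+1 * q ^+ (i - m) * q ^+ (k - m)).
    by rewrite -!mulrA -!exprD; congr (_ * (_ ^+ _)); lia.
  ring.
have sumA : \sum_(m < k.+2) A m = \sum_(m < k.+1) A m.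
  by rewrite big_ord_recr /= /A (qbin_small (ltnSn k)) mulr0 mul0r addr0.
rewrite qpochxS IHk mulr_suml.
rewrite (eq_bigr (fun m : 'I_k.+1 => A m + B m)); last first.
  by move=> m _; rewrite AB_step // -ltnS.
rewrite big_split /= -sumA big_ord_recl [RHS]big_ord_recl /= -addrA.
congr (_ + _); first by rewrite /A !qbin0.
rewrite -big_split; apply: eq_bigr => m _ /=.
by rewrite /A /B /bump leq0n add1n subSS qbinS mulrDr mulrDl.
Qed.

Lemma qmultiE (a b c : nat) :
  qmulti (a + b + c) a b c = qpoch (a + b + c) / (qpoch a * qpoch b * qpoch c).
Proof. by rewrite /qmulti !le0z_nat -!PoszD eqxx !absz_nat. Qed.

Definition qweight (k i j : nat) : F :=
  (-1) ^+ (i + j + k) *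
  q ^ (((k%:Z + i%:Z - j%:Z) * (k%:Z + i%:Z - j%:Z + 1)) %/ 2)%Z *
  qmulti j (j%:Z - i%:Z) (j%:Z - k%:Z) (i%:Z + k%:Z - j%:Z).

Lemma PauxS s k j : Paux s.+1 k j = \sum_(i < j.+1) qweight k i j * Paux s k i.
Proof. reflexivity. Qed.

Lemma qweight_eq0 k i j : (j < i)%N || (j < k)%N || (i + k < j)%N -> qweight k i j = 0.
Proof.
move=> out; rewrite /qweight /qmulti.
case: ifP => [/and4P [ge_ji ge_jk ge_ikj _] | _]; last by rewrite mulr0.
by move: out; lia.
Qed.

Lemma qweightE k i m : (m <= i)%N -> (m <= k)%N ->
  qweight k i (i + k - m) =
  (-1) ^+ m * q ^+ 'C(m.+1, 2) *
  (qpoch (i + k - m) / (qpoch (k - m) * qpoch (i - m) * qpoch m)).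
Proof.
move=> le_mi le_mk; rewrite /qweight.
have -> : k%:Z + i%:Z - (i + k - m)%N%:Z = m%:Z by lia.
have -> : (i + k - m)%N%:Z - i%:Z = (k - m)%N%:Z by lia.
have -> : (i + k - m)%N%:Z - k%:Z = (i - m)%N%:Z by lia.
have -> : i%:Z + k%:Z - (i + k - m)%N%:Z = m%:Z by lia.
have -> : (m%:Z * (m%:Z + 1) %/ 2)%Z = 'C(m.+1, 2)%:Z.
  by rewrite -[m%:Z + 1]/((m + 1)%N%:Z) addn1 -PoszM divz_nat divn2 bin2 mulnC.
have -> : (i + (i + k - m) + k = m + 2 * (i + k - m))%N by lia.
rewrite -exprnP exprD exprM sqrrN expr1n expr1n mulr1.
have -> : (i + k - m = k - m + (i - m) + m)%N by lia.
by rewrite qmultiE.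
Qed.

Lemma qbin_mul n i k N : (i + k < N)%N ->
  qbin (n + i) i * qbin (n + k) k =
  \sum_(j < N) q ^ ((k%:Z + i%:Z - j%:Z) * n%:Z) * qweight k i j * qbin (n + j) j.
Proof.
move=> lt_ikN.
pose f j := q ^ ((k%:Z + i%:Z - j%:Z) * n%:Z) * qweight k i j * qbin (n + j) j.
change (qbin (n + i) i * qbin (n + k) k = \sum_(j < N) f j).
rewrite (@sum_ord_narrow _ f (i + k).+1) //; last first.
  by move=> j /andP [lt_ikj _]; rewrite /f qweight_eq0 ?mulr0 ?mul0r // lt_ikj !orbT.
rewrite (reindex_inj rev_ord_inj) /=.
rewrite (@sum_ord_narrow _ (fun m => f (i + k - m)%N) k.+1); last 2 first.
- by rewrite ltnS leq_addl.
- move=> m /andP [lt_km lt_m]; rewrite /f qweight_eq0 ?mulr0 ?mul0r //.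
  by apply/orP; left; apply/orP; left; lia.
rewrite !qbin_qpochx (qpochx_expand (q ^+ n) i k) mulr_suml mulr_sumr.
apply: eq_bigr => -[m /= le_mk] _; rewrite ltnS in le_mk; rewrite /f.
case: (leqP m i) => [le_mi | lt_im]; last first.
  have -> : qweight k i (i + k - m) = 0 by apply: qweight_eq0; lia.
  by rewrite (qbin_small lt_im) !(mulr0, mul0r).
rewrite (qweightE le_mi le_mk) (qbinEV le_mi) (qbinEV le_mk) qbin_qpochx.
have -> : k%:Z + i%:Z - (i + k - m)%N%:Z = m%:Z by lia.
rewrite -PoszM -exprnP mulnC exprM (exprNn (q ^+ n)) !invfM.
have -> : (i + k - m = i + (k - m))%N by lia.
rewrite qpochxD.
rewrite [LHS](eq_divff_mul _ (qpoch_neq0 (i + (k - m)))).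
rewrite [RHS](eq_divff_mul _ (qpoch_neq0 i)) [RHS](eq_divff_mul _ (qpoch_neq0 k)).
rewrite [RHS](eq_divff_mul _ (qpoch_neq0 m)).
ring.
Qed.

Lemma qweight_expq n k i j :
  (-1) ^+ (i + j + k) *
  q ^ (((k%:Z + i%:Z - j%:Z) * (2 * n%:Z + k%:Z + i%:Z - j%:Z + 1)) %/ 2)%Z *
  qmulti j (j%:Z - i%:Z) (j%:Z - k%:Z) (i%:Z + k%:Z - j%:Z) =
  q ^ ((k%:Z + i%:Z - j%:Z) * n%:Z) * qweight k i j.
Proof.
set m := k%:Z + i%:Z - j%:Z.
have -> : m * (2 * n%:Z + k%:Z + i%:Z - j%:Z + 1) = m * n%:Z * 2 + m * (m + 1).
  by rewrite /m; ring.
by rewrite divzMDl // expfzDr ?q_neq0 /qweight -/m; ring.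
Qed.

Definition qpoly (x : F) := exists p : {poly int}, x = p%:F.

Lemma qpoly0 : qpoly 0. Proof. by exists 0; rewrite tofrac0. Qed.
Lemma qpoly1 : qpoly 1. Proof. by exists 1; rewrite tofrac1. Qed.
Lemma qpoly_nat b : qpoly b%:R. Proof. by exists b%:R; rewrite rmorph_nat. Qed.
Lemma qpoly_sign e : qpoly ((-1) ^+ e).
Proof. by exists ((-1) ^+ e); rewrite rmorph_sign. Qed.
Lemma qpoly_qX e : qpoly (q ^+ e). Proof. by exists ('X ^+ e); rewrite tofracXn. Qed.

Lemma qpolyD x y : qpoly x -> qpoly y -> qpoly (x + y).
Proof. by move=> [p ->] [r ->]; exists (p + r); rewrite tofracD. Qed.

Lemma qpolyM x y : qpoly x -> qpoly y -> qpoly (x * y).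
Proof. by move=> [p ->] [r ->]; exists (p * r); rewrite tofracM. Qed.

Lemma qpoly_sum m (f : 'I_m -> F) : (forall i, qpoly (f i)) -> qpoly (\sum_(i < m) f i).
Proof. by move=> qpoly_f; elim/big_ind: _ => //; [exact: qpoly0 | exact: qpolyD]. Qed.

Lemma qpoly_qbin n m : qpoly (qbin n m).
Proof.
elim: n m => [|n IHn] [|m]; rewrite ?qbin0; try exact: qpoly1.
  by rewrite (qbin_small (ltn0Sn m)); exact: qpoly0.
by rewrite qbinS; apply: qpolyD (IHn _) (qpolyM (qpoly_qX _) (IHn _)).
Qed.

Lemma qmulti_qbin (a b c : nat) :
  qmulti (a + b + c) a b c = qbin (a + b) a * qbin (a + b + c) (a + b).
Proof.
rewrite qmultiE (qbinEV (leq_addr b a)) (qbinEV (leq_addr c (a + b))) !addKn !invfM.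
by rewrite [LHS](eq_divff_mul _ (qpoch_neq0 (a + b))); ring.
Qed.

Lemma qpoly_qmulti j a b c : qpoly (qmulti j a b c).
Proof.
have [/and4P [a_ge0 b_ge0 c_ge0 /eqP sum_j] | off] :=
  boolP [&& 0 <= a, 0 <= b, 0 <= c & a + b + c == j%:Z]; last first.
  by rewrite /qmulti (negbTE off); exact: qpoly0.
move: a_ge0 b_ge0 c_ge0 sum_j; case: a => // a; case: b => // b; case: c => // c _ _ _.
rewrite -!PoszD => /(congr1 absz) /= <-.
by rewrite qmulti_qbin; apply: qpolyM; exact: qpoly_qbin.
Qed.

Lemma qpoly_qweight k i j : qpoly (qweight k i j).
Proof.
apply: qpolyM (qpoly_qmulti _ _ _ _); apply: qpolyM (qpoly_sign _) _.
set e := (_ %/ 2)%Z; have e_ge0 : 0 <= e.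
  rewrite divz_ge0 //; move: (_ - _) => m.
  by have [m_ge0 | m_lt0] := lerP 0 m; [apply: mulr_ge0 | apply: mulr_le0]; lia.
by rewrite -(gez0_abs e_ge0) -exprnP; exact: qpoly_qX.
Qed.

Lemma qpoly_Paux s k j : qpoly (Paux s k j).
Proof.
elim: s j => [|s IHs] j; first exact: qpoly_nat.
by rewrite PauxS; apply: qpoly_sum => i; apply: qpolyM (qpoly_qweight _ _ _) (IHs _).
Qed.

Lemma Paux_eq0 s k j : (s.+1 * k < j)%N -> Paux s k j = 0.
Proof.
elim: s j => [|s IHs] j lt_j; first by rewrite /= gtn_eqF // -(mul1n k).
rewrite PauxS big1 // => i _.
have [lt_ikj | le_jik] := ltnP (i + k) j.
  by rewrite qweight_eq0 ?mul0r // lt_ikj !orbT.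
by rewrite IHs ?mulr0 //; rewrite mulSn in lt_j; lia.
Qed.

Lemma qbin_pow s n k N : (s.+1 * k < N)%N ->
  qbin (n + k) k ^+ s.+1 =
  \sum_(j < N) q ^ ((s.+1%:Z * k%:Z - j%:Z) * n%:Z) * qbin (n + j) j * Paux s k j.
Proof.
elim: s N => [|s IHs] N lt_N.
  rewrite mul1n in lt_N; rewrite expr1 (bigD1 (Ordinal lt_N)) //= eqxx mulr1.
  rewrite big1 ?addr0 => [|j /negbTE ne_jk]; last first.
    by rewrite -val_eqE /= in ne_jk; rewrite ne_jk mulr0.
  by rewrite mul1r subrr mul0r expr0z mul1r.
rewrite exprSr (IHs _ (ltnSn _)) mulr_suml.
transitivity (\sum_(i < (s.+1 * k).+1) \sum_(j < N)
  q ^ ((s.+2%:Z * k%:Z - j%:Z) * n%:Z) * qbin (n + j) j * (qweight k i j * Paux s k i)).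
  apply: eq_bigr => i _.
  have lt_ikN : (i + k < N)%N by have := ltn_ord i; rewrite mulSn in lt_N; lia.
  rewrite mulrAC -(mulrA (q ^ _)) (qbin_mul n lt_ikN) mulr_sumr mulr_suml.
  apply: eq_bigr => j _.
  have -> : (s.+2%:Z * k%:Z - j%:Z) * n%:Z =
            (s.+1%:Z * k%:Z - i%:Z) * n%:Z + (k%:Z + i%:Z - j%:Z) * n%:Z by lia.
  by rewrite (expfzDr _ _ q_neq0); ring.
rewrite exchange_big; apply: eq_bigr => j _; rewrite -mulr_sumr PauxS; congr (_ * _).
pose g i := qweight k i j * Paux s k i.
transitivity (\sum_(i < (s.+1 * k).+1 + j.+1) g i).
  symmetry; apply: sum_ord_narrow => [|i /andP [lt_i _]]; first exact: leq_addr.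
  by rewrite /g Paux_eq0 ?mulr0.
apply: sum_ord_narrow => [|i /andP [lt_ji _]]; first exact: leq_addl.
by rewrite /g qweight_eq0 ?mul0r // lt_ji.
Qed.

Theorem mainTheorem9 :
  (forall (n i k N : nat), (i + k < N)%N ->
     qbin (n + i) i * qbin (n + k) k =
     \sum_(j < N)
       (-1) ^+ (i + j + k) *
       q ^ (((k%:Z + i%:Z - j%:Z) * (2 * n%:Z + k%:Z + i%:Z - j%:Z + 1)) %/ 2)%Z *
       qmulti j (j%:Z - i%:Z) (j%:Z - k%:Z) (i%:Z + k%:Z - j%:Z) *
       qbin (n + j) j)
  /\
  (forall (r k j : nat), (1 <= r)%N ->
     exists p : {poly int}, P r k j = p%:F)
  /\
  (forall (n k r N : nat), (1 <= r)%N -> (r * k < N)%N ->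
     qbin (n + k) k ^+ r =
     \sum_(j < N) q ^ ((r%:Z * k%:Z - j%:Z) * n%:Z) * qbin (n + j) j * P r k j).
Proof.
split; [|split].
- move=> n i k N lt_ikN; rewrite (qbin_mul n lt_ikN).
  by apply: eq_bigr => j _; rewrite qweight_expq.
- by move=> r k j _; exact: qpoly_Paux.
- by move=> n k [//|s] N _ /qbin_pow ->.
Qed.
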